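(* Let $Q$ be a finite closed down set of pairs with parameters $p,q,k$, $I_0,\dots,I_{k-1}$, $II_1,\dots,II_k$ as described in the context. Then $$|Q|\ge\sum_{j=1}^k II_j\Big(p+I_0+\sum_{\ell=1}^{j-1}(II_\ell+I_\ell)\Big).$$
   Context: Let $c_1,c_2,\dots$ and $s_1,s_2,\dots$ be distinct vertices, and let $Q$ be a finite set of pairs $c_as_b$ that is closed down: $c_as_b\in Q$ implies $c_{a'}s_{b'}\in Q$ for all $a'\le a$, $b'\le b$. Write $[i]\times[j]=\{c_as_b:a\le i,b\le j\}$, and let $\nu(\ell,Q)$ be the matching number of the bipartite graph with sides $\{c_1,\dots,c_\ell\},\{s_1,\dots,s_\ell\}$ and edge set $([\ell]\times[\ell])\setminus Q$. Let $p\ge0$ be the largest integer with $[p]\times[p]\subseteq Q$, and $q\ge0$ the least integer such that $\nu(\ell,Q)=\ell$ for all $\ell\ge p+q$. For every $\ell>p$ one has $\nu(\ell,Q)-\nu(\ell-1,Q)\in\{1,2\}$. The integer interval $(p,p+q]$ is divided, in increasing order, into consecutive left-open right-closed integer intervals $\mathcal O_0,\mathcal T_1,\mathcal O_1,\dots,\mathcal O_{k-1},\mathcal T_k$ such that the increment $\nu(\ell,Q)-\nu(\ell-1,Q)$ is $1$ for $\ell$ in each $\mathcal O_j$ and $2$ for $\ell$ in each $\mathcal T_j$; all intervals except possibly $\mathcal O_0$ are nonempty and the last one is $\mathcal T_k$. Set $I_j=|\mathcal O_j|$ and $II_j=|\mathcal T_j|$. *)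

From mathcomp Require Import all_boot.
From mathcomp Require Import finmap.
Set Implicit Arguments. Unset Strict Implicit. Unset Printing Implicit Defensive.
Local Open Scope fset_scope.

(* The pair c_a s_b is encoded as (a, b) : nat * nat, with a, b >= 1. *)

Definition closed_down (Q : {fset (nat * nat)}) : Prop :=
  forall a b a' b', (a, b) \in Q -> 0 < a' <= a -> 0 < b' <= b -> (a', b') \in Q.

Definition pos_indices (Q : {fset (nat * nat)}) : Prop :=
  forall a b, (a, b) \in Q -> (0 < a) && (0 < b).

Definition box_in (Q : {fset (nat * nat)}) (i j : nat) : Prop :=
  forall a b, 0 < a <= i -> 0 < b <= j -> (a, b) \in Q.

(* Bipartite graph on {c_1..c_l} and {s_1..s_l} with edges ([l]x[l]) \ Q;
   the vertex c_a (resp. s_b) is encoded by the ordinal a-1 : 'I_l. *)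
Definition is_edge (Q : {fset (nat * nat)}) (l : nat) (e : 'I_l * 'I_l) : bool :=
  (e.1.+1, e.2.+1) \notin Q.

Definition is_matching (Q : {fset (nat * nat)}) (l : nat)
    (M : {set 'I_l * 'I_l}) : bool :=
  [forall e in M, is_edge Q e] &&
  [forall e in M, forall f in M, ((e.1 == f.1) || (e.2 == f.2)) ==> (e == f)].

Definition nu (Q : {fset (nat * nat)}) (l : nat) : nat :=
  \max_(M : {set 'I_l * 'I_l} | is_matching Q M) #|M|.

From mathcomp Require Import all_boot.
From mathcomp Require Import finmap.
From mathcomp Require Import zify.

(* Put start j := p + I 0 + sum_(1 <= m < j) (II m + I m), so that T_j = (start j, start j + II j],
   and defect j := II j + ... + II k.  Telescoping nu backwards from l = p + q, where
   nu Q l = l, gives nu Q (start j) = start j - defect j; moreover nu grows by exactly one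
   at start j, unless start j = p.  Comparing a corner of Q with an antidiagonal matching
   then shows that every pair (u, v) with u <= start j and v <= defect j lies in Q or in its
   transpose.  The pairs with u <= start j and defect j.+1 < v <= defect j, for j = 1..k,
   are distinct and there are sum_j II j * start j of them; transposing those outside Q is
   injective, because defect 1 <= p and [p] x [p] lies in Q. *)

Set Implicit Arguments.
Unset Strict Implicit.

Section Matchings.
Variables (Q : {fset (nat * nat)}) (l : nat).

Lemma leq_nu (M : {set 'I_l * 'I_l}) : is_matching Q M -> #|M| <= nu Q l.
Proof. exact: (leq_bigmax_cond (F := fun M : {set 'I_l * 'I_l} => #|M|)). Qed.

Lemma nu_leP n : (forall M : {set 'I_l * 'I_l}, is_matching Q M -> #|M| <= n) -> nu Q l <= n.
Proof. by move/bigmax_leqP. Qed.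

Lemma matching_fst_inj (M : {set 'I_l * 'I_l}) : is_matching Q M -> {in M &, injective fst}.
Proof.
move=> /andP[_ /forallP matchM] e f eM fM ef.
by move: (matchM e); rewrite eM => /forall_inP/(_ f fM); rewrite ef eqxx => /eqP.
Qed.

Lemma matching_snd_inj (M : {set 'I_l * 'I_l}) : is_matching Q M -> {in M &, injective snd}.
Proof.
move=> /andP[_ /forallP matchM] e f eM fM ef.
by move: (matchM e); rewrite eM => /forall_inP/(_ f fM); rewrite ef eqxx orbT => /eqP.
Qed.

Lemma card_ord_geq y : #|[set i : 'I_l | y <= i]| = l - y.
Proof.
have -> : #|[set i : 'I_l | y <= i]| = \sum_(y <= i < l) 1.
  by rewrite big_geq_mkord -sum1_card; apply: eq_bigl => i; rewrite inE.
by rewrite sum_nat_const_nat muln1.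
Qed.

(* In a matching, the edges at c_1..c_x end in s_(y+1)..s_l, the others start in c_(x+1)..c_l. *)
Lemma nu_corner_le x y :
  closed_down Q -> (x, y) \in Q -> 0 < x <= l -> 0 < y <= l -> nu Q l + x + y <= 2 * l.
Proof.
move=> cdQ xyQ /andP[x0 xl] /andP[y0 yl].
suff : nu Q l <= (l - y) + (l - x) by lia.
apply: nu_leP => M matchM.
rewrite -(cardsID [set e : 'I_l * 'I_l | e.1 < x] M) -!card_ord_geq.
apply: leq_add.
- rewrite -(card_in_imset (f := snd)); last first.
    by move=> e f /setIP[eM _] /setIP[fM _]; apply: (matching_snd_inj matchM).
  apply/subset_leq_card/subsetP => b /imsetP[e /setIP[eM]].
  rewrite !inE => ex ->; rewrite leqNgt; apply/negP => ey.
  move: matchM => /andP[/forall_inP/(_ e eM)/negP + _]; apply.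
  by apply: (cdQ x y).
- rewrite -(card_in_imset (f := fst)); last first.
    by move=> e f /setDP[eM _] /setDP[fM _]; apply: (matching_fst_inj matchM).
  apply/subset_leq_card/subsetP => b /imsetP[e /setDP[_]].
  by rewrite !inE -leqNgt => ex ->.
Qed.

(* The antidiagonal c_a s_b, a + b = l + m + 1, a > m, avoids Q. *)
Lemma nu_antidiagonal_ge m :
  (forall x y, (x, y) \in Q -> x <= l -> y <= l -> x + y <= l + m) -> l - m <= nu Q l.
Proof.
move=> smallQ.
pose M := [set e : 'I_l * 'I_l | (m <= e.1) && (e.1 + e.2 + 1 == l + m)].
have matchM : is_matching Q M.
  apply/andP; split.
    apply/forall_inP => e; rewrite inE => /andP[_ /eqP sum_e].
    apply/negP => /smallQ; move: (ltn_ord e.1) (ltn_ord e.2) => e1l e2l /(_ e1l e2l); lia.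
  apply/forall_inP => -[e1 e2]; rewrite inE => /andP[_ /eqP /= sum_e].
  apply/forall_inP => -[f1 f2]; rewrite inE => /andP[_ /eqP /= sum_f].
  apply/implyP => /orP[] /eqP eq_ef; apply/eqP; have /= eq_val := congr1 val eq_ef;
    by rewrite eq_ef; congr (_, _); apply: val_inj => /=; lia.
apply: leq_trans (leq_nu matchM).
rewrite -card_ord_geq; apply: leq_trans (leq_imset_card fst M).
apply/subset_leq_card/subsetP => i; rewrite inE => mi.
have jl : l + m - 1 - i < l by have := ltn_ord i; lia.
apply/imsetP; exists (i, Ordinal jl) => //.
by rewrite inE /= mi /=; apply/eqP; have := ltn_ord i; lia.
Qed.

End Matchings.

(* If adding c_l, s_l raises nu by exactly one, some pair of Q in [l] x [l] has
   coordinate sum at least l + (l - nu Q l) (else the antidiagonal would beat nu),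
   and no such pair lies in [l-1] x [l-1] (else nu Q (l-1) would be too small). *)
Lemma nu_step_sym_cover (Q : {fset (nat * nat)}) l u v :
  closed_down Q -> nu Q l = (nu Q l.-1).+1 -> 0 < u <= l -> 0 < v <= l - nu Q l ->
  ((u, v) \in Q) || ((v, u) \in Q).
Proof.
move=> cdQ nu_step hu hv.
have [/hasP[[x y] xyQ /and3P[/= xl yl big]] | /hasPn smallQ] :=
  boolP (has (fun c => [&& c.1 <= l, c.2 <= l & l + (l - nu Q l) <= c.1 + c.2]) Q).
  have /orP[x_l | y_l] : (l <= x) || (l <= y).
    rewrite leqNgt [l <= y]leqNgt -negb_and; apply/andP => -[xl' yl'].
    have : nu Q l.-1 + x + y <= 2 * l.-1 by apply: (nu_corner_le cdQ xyQ); lia.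
    lia.
  - by rewrite (cdQ x y u v xyQ) //; lia.
  - by rewrite (cdQ x y v u xyQ) ?orbT //; lia.
suff : l - (l - nu Q l).-1 <= nu Q l by lia.
apply: nu_antidiagonal_ge => x y xyQ xl yl.
by move/(_ (x, y) xyQ): smallQ; rewrite /= xl yl /= -ltnNge; lia.
Qed.

Lemma telescope_const (f : nat -> nat) c a n :
  (forall i, a < i <= a + n -> f i = f i.-1 + c) -> f (a + n) = f a + c * n.
Proof.
elim: n => [|n IHn] step; first by rewrite muln0 !addn0.
rewrite addnS step /=; last by lia.
by rewrite IHn ?mulnS => [|i hi]; [lia | apply: step; lia].
Qed.

Lemma uniq_flatten_bands (T : eqType) (g : T -> nat) (t : nat -> nat) (F : nat -> seq T) a n :
  {homo t : i j /~ i <= j} -> (forall j, uniq (F j)) ->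
  (forall j x, x \in F j -> t j.+1 < g x <= t j) ->
  uniq (flatten [seq F j | j <- iota a n]).
Proof.
move=> t_anti uniqF bandF; elim: n a => [|n IHn] a //=.
rewrite cat_uniq uniqF IHn andbT /=; apply/hasPn => x /flattenP[s /mapP[j]].
rewrite mem_iota => /andP[aj _] -> xj; apply/negP => xa.
have := bandF _ _ xa; have := bandF _ _ xj; have := t_anti _ _ aj; lia.
Qed.

(* Swapping the pairs outside Q is injective on a set of pairs whose second
   coordinates lie in [p], because Q contains [p] x [p]. *)
Lemma size_sym_cover_le (Q : {fset (nat * nat)}) p (s : seq (nat * nat)) :
  box_in Q p p -> uniq s ->
  (forall c, c \in s -> 0 < c.2 <= p /\ ((c \in Q) || ((c.2, c.1) \in Q))) ->
  size s <= #|` Q|%fset.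
Proof.
move=> boxQ uniq_s cover_s.
pose f (c : nat * nat) := if c \in Q then c else (c.2, c.1).
rewrite -(size_map f); apply: uniq_leq_size.
  rewrite map_inj_in_uniq // => -[a b] [a' b'] /cover_s[/= hb _] /cover_s[/= hb' _].
  rewrite /f; case: ifP => abQ; case: ifP => abQ' // [e1 e2]; subst => //.
  - by rewrite boxQ in abQ'.
  - by rewrite boxQ in abQ.
by move=> _ /mapP[c /cover_s[_ cover_c] ->]; rewrite /f; case: ifP cover_c.
Qed.

Lemma sum_tail_antitone (F : nat -> nat) n :
  {homo (fun j => \sum_(j <= m < n) F m) : i j /~ i <= j}.
Proof.
move=> i j ji /=; case: (leqP i n) => [i_n | /ltnW n_i]; last by rewrite big_geq.
by rewrite [X in _ <= X](big_cat_nat ji i_n) leq_addl.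
Qed.

Lemma staircase_card_le (Q : {fset (nat * nat)}) p k (L II : nat -> nat) :
  box_in Q p p -> \sum_(1 <= m < k.+1) II m <= p ->
  (forall j u v, 0 < j <= k -> 0 < u <= L j -> 0 < v <= \sum_(j <= m < k.+1) II m ->
     ((u, v) \in Q) || ((v, u) \in Q)) ->
  \sum_(1 <= j < k.+1) II j * L j <= #|` Q|%fset.
Proof.
move=> boxQ t1p coverQ.
pose t j := \sum_(j <= m < k.+1) II m.
have t_anti : {homo t : i j /~ i <= j} := @sum_tail_antitone II k.+1.
pose B j := [seq (u, v) | u <- iota 1 (L j), v <- iota (t j.+1).+1 (t j - t j.+1)].
have memB j c : c \in B j -> 0 < c.1 <= L j /\ t j.+1 < c.2 <= t j.
  have := t_anti _ _ (leqnSn j).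
  by move=> tj /allpairsP[[u v] [/=]]; rewrite !mem_iota => hu hv -> /=; lia.
have -> : \sum_(1 <= j < k.+1) II j * L j = size (flatten (map B (iota 1 k))).
  rewrite size_flatten /shape -map_comp sumnE big_map.
  have -> : iota 1 k = index_iota 1 k.+1 by rewrite /index_iota subn1.
  apply: eq_big_nat => j /andP[_ jk].
  by rewrite /= size_allpairs !size_iota [t j]big_ltn // addnK mulnC.
apply: size_sym_cover_le boxQ _ _.
  apply: (@uniq_flatten_bands _ snd t) => // j.
  - by apply: allpairs_uniq; rewrite ?iota_uniq // => -[? ?] [? ?].
  - by move=> c /memB[].
move=> c /flattenP[b /mapP[j]]; rewrite mem_iota => jk -> /memB[hu hv].
have jk' : 0 < j <= k by lia.
have tjp : t j <= p := leq_trans (t_anti _ _ (proj1 (andP jk'))) t1p.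
have v_band : 0 < c.2 <= t j by lia.
split; first by lia.
by move: (coverQ j c.1 c.2 jk' hu v_band); rewrite -surjective_pairing.
Qed.

Section Staircase.
Variables (Q : {fset (nat * nat)}) (p q k : nat) (I II : nat -> nat).
Hypothesis nu_large : forall l, p + q <= l -> nu Q l = l.
Hypothesis partition_pq :
  p + I 0 + \sum_(1 <= j < k.+1) II j + \sum_(1 <= j < k) I j = p + q.
Hypothesis nu_O0 : forall l, p < l <= p + I 0 -> nu Q l = (nu Q l.-1).+1.
Hypothesis nu_T : forall j, 1 <= j <= k ->
  0 < II j /\
  forall l, p + I 0 + \sum_(1 <= m < j) (II m + I m) < l <=
            p + I 0 + \sum_(1 <= m < j) (II m + I m) + II j ->
    nu Q l = (nu Q l.-1).+2.
Hypothesis nu_O : forall j, 1 <= j < k ->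
  0 < I j /\
  forall l, p + I 0 + \sum_(1 <= m < j) (II m + I m) + II j < l <=
            p + I 0 + \sum_(1 <= m < j) (II m + I m) + II j + I j ->
    nu Q l = (nu Q l.-1).+1.

Let start j := p + I 0 + \sum_(1 <= m < j) (II m + I m).
Let defect j := \sum_(j <= m < k.+1) II m.

Lemma start_succ j : 0 < j -> start j.+1 = start j + II j + I j.
Proof. by move=> j0; rewrite /start big_nat_recr //= !addnA. Qed.

Lemma defect_succ j : j <= k -> defect j = II j + defect j.+1.
Proof. by move=> jk; rewrite /defect big_ltn. Qed.

Lemma nu_start_add_II j : 0 < j <= k -> nu Q (start j + II j) = nu Q (start j) + 2 * II j.
Proof. by move=> jk; apply: telescope_const => l /(proj2 (nu_T jk)) ->; rewrite addn2. Qed.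

Lemma nu_start_succ j : 0 < j < k -> nu Q (start j.+1) = nu Q (start j) + 2 * II j + I j.
Proof.
move=> jk; rewrite start_succ; last by case/andP: jk.
rewrite (@telescope_const _ 1) => [|l /(proj2 (nu_O jk)) ->]; last by rewrite addn1.
by rewrite nu_start_add_II ?mul1n //; case/andP: jk => -> /ltnW.
Qed.

Lemma start_last : 0 < k -> start k + II k = p + q.
Proof. by move=> k0; rewrite -partition_pq /start big_split /= big_nat_recr //=; lia. Qed.

Lemma nu_start_add_defect j : 0 < j <= k -> nu Q (start j) + defect j = start j.
Proof.
case/andP=> j0 jk; have k0 := leq_trans j0 jk.
rewrite -(subKn jk); have : k - j < k by lia.
elim: (k - j) => [|d IHd] dk.
  rewrite subn0 defect_succ // [defect k.+1]big_geq // addn0.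
  have := @nu_start_add_II k; rewrite start_last // nu_large // k0 leqnn => /(_ isT).
  have := start_last k0; lia.
have := IHd (ltnW dk); rewrite (_ : k - d = (k - d.+1).+1); last by lia.
rewrite nu_start_succ ?start_succ ?[defect (k - d.+1)]defect_succ; lia.
Qed.

Lemma defect_le_p : defect 1 <= p.
Proof.
case: (posnP k) => [k0 | k_gt0]; first by rewrite /defect k0 big_geq.
have := @nu_start_add_defect 1; rewrite /start big_geq // addn0 k_gt0 => /(_ isT).
rewrite (@telescope_const _ 1) => [|l /nu_O0 ->]; [lia | by rewrite addn1].
Qed.

Lemma start_eq_p_or_nu_step j : 0 < j <= k ->
  start j = p \/ nu Q (start j) = (nu Q (start j).-1).+1.
Proof.
case: j => [|[|j]] // jk.
  rewrite /start big_geq // addn0.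
  by case: (posnP (I 0)) => [-> | I0]; [left; rewrite addn0 | right; apply: nu_O0; lia].
have jk' : 0 < j.+1 < k by lia.
right; rewrite start_succ //; apply: (proj2 (nu_O jk')).
by have := proj1 (nu_O jk'); rewrite /start; lia.
Qed.

Lemma start_defect_sym_cover j u v :
  closed_down Q -> box_in Q p p -> 0 < j <= k -> 0 < u <= start j -> 0 < v <= defect j ->
  ((u, v) \in Q) || ((v, u) \in Q).
Proof.
move=> cdQ boxQ jk hu hv.
have d1j : defect j <= defect 1 := sum_tail_antitone II k.+1 (proj1 (andP jk)).
have d1p := defect_le_p.
case: (start_eq_p_or_nu_step jk) => [start_p | step].
  by rewrite boxQ //; lia.
by apply: nu_step_sym_cover step hu _ => //; have := nu_start_add_defect jk; lia.
Qed.

End Staircase.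

Unset Implicit Arguments.

Theorem lemma7 (Q : {fset (nat * nat)}) (p q k : nat) (I II : nat -> nat) :
  closed_down Q ->
  pos_indices Q ->
  (* p is the largest integer with [p] x [p] inside Q *)
  box_in Q p p ->
  (forall p', box_in Q p' p' -> p' <= p) ->
  (* q is the least integer with nu(l,Q) = l for all l >= p + q *)
  (forall l, p + q <= l -> nu Q l = l) ->
  (forall q', (forall l, p + q' <= l -> nu Q l = l) -> q <= q') ->
  (* (p, p+q] = O_0, T_1, O_1, ..., O_(k-1), T_k in increasing order,
     with |O_j| = I j and |T_j| = II j *)
  p + I 0 + \sum_(1 <= j < k.+1) II j + \sum_(1 <= j < k) I j = p + q ->
  (forall l, p < l <= p + I 0 -> nu Q l = (nu Q l.-1).+1) ->
  (forall j, 1 <= j <= k ->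
     0 < II j /\
     forall l, p + I 0 + \sum_(1 <= m < j) (II m + I m) < l <=
               p + I 0 + \sum_(1 <= m < j) (II m + I m) + II j ->
       nu Q l = (nu Q l.-1).+2) ->
  (forall j, 1 <= j < k ->
     0 < I j /\
     forall l, p + I 0 + \sum_(1 <= m < j) (II m + I m) + II j < l <=
               p + I 0 + \sum_(1 <= m < j) (II m + I m) + II j + I j ->
       nu Q l = (nu Q l.-1).+1) ->
  \sum_(1 <= j < k.+1) II j * (p + I 0 + \sum_(1 <= m < j) (II m + I m))
    <= #|` Q|%fset.
Proof.
move=> cdQ _ boxQ _ nu_large _ partition_pq nu_O0 nu_T nu_O.
apply: (staircase_card_le boxQ).
  exact: (defect_le_p nu_large partition_pq nu_O0 nu_T nu_O).
move=> j u v; exact: (start_defect_sym_cover nu_large partition_pq nu_O0 nu_T nu_O cdQ boxQ).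
Qed.
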